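(* Let $q=2^h$ with $h\equiv 1\pmod 2$ and let $$U=\left\{\left(x,\,y,\,x^q+y^{q^2},\,x^{q^2}+y^q+y^{q^2}\right): x,y\in\mathbb F_{q^4}\right\}\subseteq\mathbb F_{q^4}^4.$$ Then $U$ is $(2,3)_q$-evasive, i.e. $\dim_{\mathbb F_q}(U\cap H)\le 3$ for every $2$-dimensional $\mathbb F_{q^4}$-subspace $H$ of $\mathbb F_{q^4}^4$.
   Context: $U$ is an $\mathbb F_q$-subspace of $\mathbb F_{q^4}^4$ of $\mathbb F_q$-dimension $8$. *)

From HB Require Import structures.
From mathcomp Require Import all_boot all_order all_algebra all_field.
From mathcomp Require Import ring.
Set Implicit Arguments. Unset Strict Implicit. Unset Printing Implicit Defensive.
Import GRing.Theory.
Local Open Scope ring_scope.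

(* Setting: K is a finite field playing the role of F_q (q = #|K|),
   L is a degree-4 field extension of K (so L = F_{q^4}),
   V = L^4 viewed as a K-vector space ({ffun 'I_4 -> L} is a vectType K). *)

Definition L4 (K : finFieldType) (L : fieldExtType K) := {ffun 'I_4 -> L}.

Definition Umap (K : finFieldType) (L : fieldExtType K) (p : L * L) : L4 L :=
  let q := #|K| in
  let x := p.1 in let y := p.2 in
  [ffun i : 'I_4 =>
     [:: x; y; x ^+ q + y ^+ (q ^ 2); x ^+ (q ^ 2) + y ^+ q + y ^+ (q ^ 2)]`_i].

Definition Uspace (K : finFieldType) (L : fieldExtType K) : {vspace L4 L} :=
  limg (linfun (@Umap K L)).

(* For A : 'M[L]_(2,4), the map (a,b) |-> a * row 0 of A + b * row 1 of A;
   its image is the L-row space of A, here seen as a K-subspace of L^4. *)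
Definition rowmap (K : finFieldType) (L : fieldExtType K) (A : 'M[L]_(2, 4))
  (p : L * L) : L4 L :=
  [ffun i : 'I_4 => p.1 * A 0 i + p.2 * A 1 i].

Definition Hspace (K : finFieldType) (L : fieldExtType K) (A : 'M[L]_(2, 4))
  : {vspace L4 L} := limg (linfun (rowmap A)).

(* Sanity: rowmap is K-linear, so Hspace A is exactly the L-row space of A. *)
Lemma rowmap_linear (K : finFieldType) (L : fieldExtType K) (A : 'M[L]_(2, 4)) :
  linear (rowmap A).
Proof.
move=> k [a b] [c d]; apply/ffunP => i; rewrite !ffunE /=.
by rewrite !mulrDl scalerDr !scalerAl addrACA.
Qed.

Lemma rowmap_spec (K : finFieldType) (L : fieldExtType K) (A : 'M[L]_(2, 4))
  (a b : L) (i : 'I_4) :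
  a * A 0 i + b * A 1 i = (\row_(j < 2) [:: a; b]`_j *m A) 0 i.
Proof.
rewrite !mxE big_ord_recr big_ord1 !mxE /=.
by congr (_ * A _ _ + _ * A _ _); apply/val_inj.
Qed.

(* Sanity: Umap is K-linear when #|K| = 2^h, so Uspace is exactly U. *)
Lemma frob_linear (K : finFieldType) (L : fieldExtType K) h
  (cardK : #|K| = (2 ^ h)%N) (n : nat) (k : K) (x y : L) :
  (k *: x + y) ^+ (#|K| ^ n) = k *: x ^+ (#|K| ^ n) + y ^+ (#|K| ^ n).
Proof.
have p2 : (2%N \in [pchar K]) by apply: (card_finPcharP cardK).
have p2L : (2%N \in [pchar L]) by rewrite pchar_lalg.
rewrite exprDn_pchar; last first.
  by rewrite cardK -expnM pnatX (pnatE _ (pcharf_prime p2L)) p2L.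
rewrite -mulr_algl exprMn_comm; last exact: mulrC.
rewrite -[_%:A ^+ _](rmorphXn (in_alg L)) /=.
suff -> : k ^+ (#|K| ^ n) = k by rewrite mulr_algl.
elim: n => [|n IH]; first by rewrite expr1.
by rewrite expnS mulnC exprM IH expf_card.
Qed.

Lemma Umap_linear (K : finFieldType) (L : fieldExtType K) h
  (cardK : #|K| = (2 ^ h)%N) : linear (@Umap K L).
Proof.
have F n k x y := @frob_linear K L h cardK n k x y.
have F1 (k : K) (x y : L) : (k *: x + y) ^+ #|K| = k *: x ^+ #|K| + y ^+ #|K|.
  by have := F 1%N k x y; rewrite expn1.
move=> k [a b] [c d]; apply/ffunP => i; rewrite !ffunE /=.
case: i => [[|[|[|[|i]]]] Hi] //=; rewrite ?F ?F1 ?scalerDr.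
  by rewrite addrACA.
set A1 := k *: a ^+ (#|K| ^ 2); set B1 := k *: b ^+ #|K|.
set B2 := k *: b ^+ (#|K| ^ 2); clearbody A1 B1 B2; ring.
Qed.

From HB Require Import structures.
From mathcomp Require Import all_boot all_order all_algebra all_field.
From mathcomp Require Import ring.
Set Implicit Arguments. Unset Strict Implicit. Unset Printing Implicit Defensive.
Import GRing.Theory.
Local Open Scope ring_scope.

(* Write σ for x |-> x ^ q on L = F_(q^4).  If dim (U :&: H) >= 4, pick four
   F_q-independent points (X j, Y j) of U in H.  Artin's trace argument shows
   that no nonzero c annihilates all the columns σ^i X, σ^i Y (vectors of L^4
   indexed by j).  If the first two coordinates of H are independent, H is a
   graph over them, so σ^2 X and σ^2 Y are L-combinations of X, Y, σX, σY;
   these four columns are then a basis of L^4, and expanding σ^4 X = X and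
   σ^4 Y = Y in it forces some f in F_q with f^2 + f + 1 = 0, impossible as
   q = 2^h with h odd.  Otherwise X = al V and Y = be V for a single column
   V, so V, σV, σ^2 V, σ^3 V is a basis, and the last two coordinates of H
   force al σal + al σbe + be σbe = 0 with (al, be) != 0; for t = be / al
   this again yields t in F_q with t^2 + t + 1 = 0. *)

Section Frobenius.

Variables (K : finFieldType) (L : fieldExtType K).
Implicit Types (x y : L) (m n : nat).

Definition frob n x := x ^+ (#|K| ^ n).

Lemma pchar_nat_card_pow n : [pchar L].-nat (#|K| ^ n)%N.
Proof.
have [p _ pcharKp] := finPcharP K.
rewrite (card_pprimeChar pcharKp) -expnM pnatX (pnatE _ (pcharf_prime pcharKp)).
by rewrite (pchar_lalg L) pcharKp.
Qed.

Lemma frob_is_zmod_morphism n : zmod_morphism (frob n).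
Proof.
by move=> x y; rewrite /frob exprDn_pchar ?exprNn_pchar ?pchar_nat_card_pow.
Qed.

Lemma frob_is_monoid_morphism n : monoid_morphism (frob n).
Proof. by rewrite /frob; split=> [|x y]; rewrite ?exprMn ?expr1n. Qed.

HB.instance Definition _ n :=
  GRing.isZmodMorphism.Build L L (frob n) (frob_is_zmod_morphism n).
HB.instance Definition _ n :=
  GRing.isMonoidMorphism.Build L L (frob n) (frob_is_monoid_morphism n).

Lemma frob0 x : frob 0 x = x.
Proof. by rewrite /frob expn0 expr1. Qed.

Lemma frob_frob m n x : frob m (frob n x) = frob (m + n) x.
Proof. by rewrite /frob -exprM -expnD addnC. Qed.

Lemma frobSr n x : frob n.+1 x = frob n (frob 1 x).
Proof. by rewrite frob_frob addn1. Qed.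

Lemma frob_dimf x : frob (\dim {:L}) x = x.
Proof.
by have := Fermat's_little_theorem (aspacef L) x; rewrite memvf => /esym/eqP.
Qed.

Lemma memv1_frob x : (x \in 1%VS) = (frob 1 x == x).
Proof. by rewrite Fermat's_little_theorem dimv1. Qed.

Let dimf_S : exists n, \dim {:L} = n.+1.
Proof. by exists (\dim {:L}).-1; rewrite prednK ?adim_gt0. Qed.

Definition frob_trace x := \sum_(i < \dim {:L}) frob i x.

Lemma frob1_trace x : frob 1 (frob_trace x) = frob_trace x.
Proof.
have [n dimL] := dimf_S; rewrite rmorph_sum /=.
under eq_bigr => i _ do rewrite frob_frob add1n.
by rewrite /frob_trace dimL big_ord_recr big_ord_recl /= -dimL frob_dimf frob0 addrC.
Qed.

Lemma exists_frob_trace_neq0 : exists lam, frob_trace lam != 0.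
Proof.
have q_gt1 : (1 < #|K|)%N := finNzRing_gt1 K.
have [n dimL] := dimf_S; rewrite /frob_trace dimL.
pose P := fun lam : finvect_type L => \sum_(i < n.+1) frob i lam != 0.
have [lam Plam | trace0] := pickP P; first by exists lam.
exfalso; pose p : {poly L} := \sum_(i < n.+1) 'X^(#|K| ^ i).
have p_neq0 : p != 0.
  apply/eqP => /(congr1 (fun r : {poly L} => r`_(#|K| ^ n))) /eqP.
  rewrite coef_sum coef0 (bigD1 ord_max) //= coefXn eqxx big1 ?addr0 ?oner_eq0 //.
  move=> i i_neq; rewrite coefXn eqn_exp2l //.
  by rewrite eq_sym (negbTE (i_neq : (i : nat) != n)).
have size_p : (size p <= (#|K| ^ n).+1)%N.
  apply: leq_trans (size_sum _ _ _) _; apply/bigmax_leqP => i _.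
  by rewrite size_polyXn ltnS leq_pexp2l ?(ltnW q_gt1) // -ltnS.
have cardL : size (enum (finvect_type L)) = (#|K| ^ n.+1)%N.
  have := card_vspace (fullv : {vspace finvect_type L}).
  by rewrite card_vspacef dimL cardE.
have := max_poly_roots p_neq0 _ (enum_uniq (finvect_type L)).
have -> : all (root p) (enum (finvect_type L)).
  apply/allP => x _; rewrite /root horner_sum.
  under eq_bigr => i _ do rewrite hornerXn.
  by have /negbFE := trace0 x.
move=> /(_ isT) /leq_trans /(_ size_p).
by rewrite cardL ltnS leqNgt ltn_exp2l ?ltnSn.
Qed.

(* Artin's trick: d j is the trace of mu * c j, where mu is scaled so that
   d j0 is a nonzero trace. *)
Lemma frob_descent (I : finType) (c : I -> L) (j0 : I) : c j0 != 0 ->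
  exists2 d : I -> K, d j0 != 0 &
    forall z : I -> L, (forall i, \sum_j c j * frob i (z j) = 0) ->
    \sum_j d j *: z j = 0.
Proof.
move=> cj0_neq0; have [lam tr_lam_neq0] := exists_frob_trace_neq0.
pose mu := lam / c j0; pose t j := frob_trace (mu * c j).
have /(@fin_all_exists I (fun=> K) (fun j k => t j = k%:A)) [d t_d] :
    forall j, exists k : K, t j = k%:A.
  move=> j; have /vlineP [k ->] : t j \in 1%VS by rewrite memv1_frob frob1_trace.
  by exists k.
exists d.
  apply: contraNneq tr_lam_neq0 => dj0_0.
  by rewrite -[lam](divfK cj0_neq0) -/mu -/(t j0) t_d dj0_0 scale0r.
move=> z z_ker; under eq_bigr => j _ do rewrite -mulr_algl -t_d mulr_suml.
rewrite exchange_big /=; apply: big1 => i _.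
transitivity (frob i (mu * \sum_j c j * frob (\dim {:L} - i) (z j))).
  rewrite rmorphM rmorph_sum mulr_sumr /=; apply: eq_bigr => j _.
  by rewrite !rmorphM /= frob_frob subnKC ?frob_dimf ?mulrA // ltnW.
by rewrite z_ker mulr0 rmorph0.
Qed.

Definition moore_full_rank (I : finType) (X Y : I -> L) :=
  forall c : I -> L,
    (forall i, \sum_j c j * frob i (X j) = 0 /\ \sum_j c j * frob i (Y j) = 0) ->
  forall j, c j = 0.

Lemma moore_full_rank_of_free (I : finType) (X Y : I -> L) :
    (forall d : I -> K, \sum_j d j *: X j = 0 -> \sum_j d j *: Y j = 0 ->
       forall j, d j = 0) ->
  moore_full_rank X Y.
Proof.
move=> XY_free c c_ker j0; have [// | cj0_neq0] := eqVneq (c j0) 0.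
have [d dj0_neq0 d_ker] := frob_descent cj0_neq0.
have := XY_free d (d_ker X (fun i => (c_ker i).1)) (d_ker Y (fun i => (c_ker i).2)).
by move=> /(_ j0) d_eq0; rewrite d_eq0 eqxx in dj0_neq0.
Qed.

End Frobenius.

Lemma sum_mul_lincomb_eq0 (R : comNzRingType) (I : finType) (c Z A B C D : I -> R)
    (k1 k2 k3 k4 : R) :
  (forall j, Z j = k1 * A j + k2 * B j + k3 * C j + k4 * D j) ->
  \sum_j c j * A j = 0 -> \sum_j c j * B j = 0 -> \sum_j c j * C j = 0 ->
  \sum_j c j * D j = 0 -> \sum_j c j * Z j = 0.
Proof.
move=> Z_comb cA cB cC cD.
transitivity (k1 * \sum_j c j * A j + k2 * \sum_j c j * B j +
  k3 * \sum_j c j * C j + k4 * \sum_j c j * D j); last by rewrite cA cB cC cD; ring.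
by rewrite !mulr_sumr -!big_split /=; apply: eq_bigr => j _; rewrite Z_comb; ring.
Qed.

Lemma free4_of_annihilator (F : fieldType) (Z0 Z1 Z2 Z3 : 'I_4 -> F) :
    (forall c : 'I_4 -> F, \sum_j c j * Z0 j = 0 -> \sum_j c j * Z1 j = 0 ->
       \sum_j c j * Z2 j = 0 -> \sum_j c j * Z3 j = 0 -> forall j, c j = 0) ->
  forall l0 l1 l2 l3 : F,
    (forall j, l0 * Z0 j + l1 * Z1 j + l2 * Z2 j + l3 * Z3 j = 0) ->
  [/\ l0 = 0, l1 = 0, l2 = 0 & l3 = 0].
Proof.
move=> ann0 l0 l1 l2 l3 rel.
pose M : 'M[F]_4 := \matrix_(j, k) [:: Z0 j; Z1 j; Z2 j; Z3 j]`_k.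
have M_free : row_free M^T.
  rewrite row_free_unit unitmx_tr unitmxE unitfE; apply/det0P => -[c c_neq0 cM0].
  have cM0k k (k_lt4 : (k < 4)%N) : \sum_j c 0 j * [:: Z0 j; Z1 j; Z2 j; Z3 j]`_k = 0.
    have := congr1 (fun r : 'rV_4 => r 0 (Ordinal k_lt4)) cM0; rewrite !mxE => cM0k.
    by rewrite -[RHS]cM0k; apply: eq_bigr => j _; rewrite mxE.
  move/eqP: c_neq0; apply; apply/rowP => j; rewrite mxE.
  exact: (ann0 (c 0) (cM0k 0%N isT) (cM0k 1%N isT) (cM0k 2%N isT) (cM0k 3%N isT)).
pose l := \row_(k < 4) [:: l0; l1; l2; l3]`_k.
have /eqP : l *m M^T = 0.
  apply/rowP => j; rewrite !mxE; under eq_bigr => k _ do rewrite !mxE.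
  by rewrite !big_ord_recr big_ord0 /= add0r -(rel j).
rewrite mulmx_free_eq0 // => /eqP/rowP l_eq0.
have lk k (k_lt4 : (k < 4)%N) : [:: l0; l1; l2; l3]`_k = 0.
  by have := l_eq0 (Ordinal k_lt4); rewrite !mxE.
by split; [exact: (lk 0%N) | exact: (lk 1%N) | exact: (lk 2%N) | exact: (lk 3%N)].
Qed.

Lemma free_tuple_in_vspace (F : fieldType) (vT : vectType F) (W : {vspace vT}) n :
  (n <= \dim W)%N -> exists2 w : n.-tuple vT, free w & {subset w <= W}.
Proof.
move=> n_le; have size_w : size (take n (vbasis W)) == n.
  by rewrite size_takel // size_tuple.
exists (Tuple size_w) => [|w /mem_take]; last exact: vbasis_mem.
apply: (catl_free (Y := drop n (vbasis W))).
by rewrite cat_take_drop (basis_free (vbasisP W)).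
Qed.

Lemma row_free2_eq0 (F : fieldType) n (A : 'M[F]_(2, n)) (z0 z1 : F) :
  row_free A -> (forall k, z0 * A 0 k + z1 * A 1 k = 0) -> z0 = 0 /\ z1 = 0.
Proof.
move=> A_free zA0; have /eqP : \row_(i < 2) [:: z0; z1]`_i *m A = 0.
  apply/rowP => k; rewrite !mxE big_ord_recr big_ord1 !mxE -[RHS](zA0 k).
  by congr (_ * A _ _ + _ * A _ _); apply/val_inj.
rewrite mulmx_free_eq0 // => /eqP/rowP z_eq0.
by split; [move: (z_eq0 0) | move: (z_eq0 1)]; rewrite !mxE.
Qed.

Lemma det2_eq0_proportional (F : fieldType) (p0 r0 p1 r1 : F) :
    p0 * r1 = p1 * r0 ->
  exists P R al be : F,
    [/\ (P != 0) || (R != 0), p0 = al * P, r0 = al * R, p1 = be * P & r1 = be * R].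
Proof.
move=> det0; have [p0_0 | p0_neq0] := eqVneq p0 0; last first.
  exists p0, r0, 1, (p1 / p0); rewrite p0_neq0 !mul1r divfK //.
  by split=> //; rewrite mulrAC -det0; field.
have [r0_0 | r0_neq0] := eqVneq r0 0; last first.
  have p1_0 : p1 = 0.
    by apply/eqP; rewrite -(mulIr_eq0 _ (mulIf r0_neq0)) -det0 p0_0 mul0r.
  exists p0, r0, 1, (r1 / r0).
  by rewrite r0_neq0 orbT !mul1r divfK // p0_0 p1_0 mulr0.
rewrite p0_0 r0_0; have [pr1_neq0 | pr1_0] := boolP ((p1 != 0) || (r1 != 0)).
  by exists p1, r1, 0, 1; rewrite !mul0r !mul1r.
exists 1, 0, 0, 0; rewrite oner_eq0 !mul0r; move: pr1_0.
by rewrite negb_or => /andP[/negbNE/eqP -> /negbNE/eqP ->].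
Qed.

HB.instance Definition _ (K : finFieldType) (L : fieldExtType K) (A : 'M[L]_(2, 4)) :=
  GRing.isLinear.Build K (L * L)%type (L4 L) *:%R (rowmap A) (rowmap_linear A).

Lemma expn2_odd_mod3 k : odd k -> 2 ^ k = 2 %[mod 3].
Proof.
move=> k_odd; rewrite -(odd_double_half k) k_odd add1n expnS -mul2n expnM.
by rewrite -modnMmr -modnXm exp1n.
Qed.

Section QuarticExtensionChar2.

Variables (h : nat) (K : finFieldType) (L : fieldExtType K).
Hypotheses (h_odd : odd h) (cardK : #|K| = (2 ^ h)%N) (dimL : \dim {:L} = 4%N).

Local Notation σ := (@frob K L 1).

Lemma pcharL2 : 2 \in [pchar L].
Proof. by rewrite pchar_lalg (card_finPcharP cardK). Qed.

Let two_eq0 : 2%:R = 0 :> L := pcharf0 pcharL2.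

Let add0_eq (x y : L) : x + y = 0 -> x = y.
Proof. by move/eqP; rewrite addr_eq0 (oppr_pchar2 pcharL2) => /eqP. Qed.

Lemma frob2 x : frob 2 x = σ (σ x).
Proof. by rewrite frob_frob. Qed.

Lemma frob4 x : σ (σ (σ (σ x))) = x.
Proof. by rewrite !frob_frob (_ : 1 + 1 + 1 + 1 = \dim {:L})%N ?frob_dimf ?dimL. Qed.

Lemma frob_addn4 n (x : L) : frob n.+4 x = frob n x.
Proof. by rewrite -addn4 -frob_frob -dimL frob_dimf. Qed.

Lemma no_cube_root_unity (f : L) : σ f = f -> f ^+ 2 + f + 1 != 0.
Proof.
move=> f_fixed; apply/eqP => f_root.
have f3 : f ^+ 3 = 1.
  have -> : f ^+ 3 = (f - 1) * (f ^+ 2 + f + 1) + 1 by ring.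
  by rewrite f_root mulr0 add0r.
have f2 : f ^+ 2 = f.
  rewrite -[RHS]f_fixed /frob expn1 (divn_eq #|K| 3) cardK.
  by rewrite (expn2_odd_mod3 h_odd) exprD mulnC exprM f3 expr1n mul1r.
move: f_root; rewrite f2 -mulr2n -mulr_natr two_eq0 mulr0 add0r.
by move/eqP; rewrite oner_eq0.
Qed.

(* σ t = 1 / (t + 1) would make σ act as a Möbius map of order 3, so
   σ^3 t = t; together with σ^4 t = t this gives σ t = t. *)
Lemma frob_mobius_neq1 (t : L) : σ t * (t + 1) != 1.
Proof.
apply/eqP => E0.
have frob_eq1 x y : x * (y + 1) = 1 -> σ x * (σ y + 1) = 1.
  by move=> xy1; rewrite -(rmorph1 σ) -rmorphD -rmorphM xy1.
have E1 := frob_eq1 _ _ E0; have E2 := frob_eq1 _ _ E1.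
have E3 := frob_eq1 _ _ E2; rewrite frob4 in E3.
have tE : t * σ (σ t) = t + 1.
  transitivity ((t + 1) * (σ (σ t) * (σ t + 1))); last by rewrite E1 mulr1.
  have -> : (t + 1) * (σ (σ t) * (σ t + 1)) = σ (σ t) * (σ t * (t + 1) + t + 1).
    by ring.
  by rewrite E0; ring: two_eq0.
have neq0 (x y : L) : x * y = 1 -> y != 0.
  move=> xy1; apply/eqP => y0; move: xy1.
  by rewrite y0 mulr0 => /esym/eqP; rewrite oner_eq0.
have t3 : σ (σ (σ t)) = t.
  by apply: (mulIf (neq0 _ _ E2)); rewrite E2 mulrDr tE mulr1; ring: two_eq0.
rewrite t3 in E3.
have t1 : σ t = t by apply: (mulIf (neq0 _ _ E0)); rewrite E0 E3.
move/eqP: (no_cube_root_unity t1); apply.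
have -> : t ^+ 2 + t + 1 = t * (t + 1) + 1 by ring.
by rewrite E3 -mulr2n -mulr_natl two_eq0 mul0r.
Qed.

Lemma frob_form_neq0 (a b : L) :
  (a != 0) || (b != 0) -> a * σ a + a * σ b + b * σ b != 0.
Proof.
have [-> /= b_neq0 | a_neq0 _] := eqVneq a 0.
  by rewrite !mul0r !add0r mulf_neq0 ?fmorph_eq0.
have -> : b = (b / a) * a by rewrite divfK.
set t := b / a; have -> : a * σ a + a * σ (t * a) + t * a * σ (t * a) =
    a * σ a * (1 + σ t * (t + 1)) by rewrite rmorphM; ring.
rewrite !mulf_neq0 ?fmorph_eq0 // addr_eq0 (oppr_pchar2 pcharL2) eq_sym.
exact: frob_mobius_neq1.
Qed.

(* With σ^2 Y = σX + aX + bY and σ^2 X = σX + σY + fX + eY, these are the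
   coordinates of σ^4 X = X and σ^4 Y = Y in the basis X, Y, σX, σY. *)
Lemma frob_system_absurd (a b e f : L) :
  f * σ (σ f) + a * (σ (σ e) + 1) = 1 -> e * σ (σ f) + b * (σ (σ e) + 1) = 0 ->
  σ f + σ a + σ (σ f) + σ (σ e) + 1 = 0 -> σ e + σ b + σ (σ f) = 0 ->
  σ f + σ (σ a) + σ (σ b) = 0 -> σ e + σ (σ a) + 1 = 0 -> False.
Proof.
move=> E1 E2 E3 E4 E5 E6.
have σσ_inj := inj_comp (fmorph_inj σ) (fmorph_inj σ).
have hb : b = e + σ f.
  apply: (fmorph_inj σ); rewrite !rmorphD; apply: add0_eq.
  by rewrite -[RHS]E4; ring: two_eq0.
have ha2 : σ (σ a) = σ e + 1 by apply: add0_eq; rewrite -[RHS]E6; ring.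
have ha1 : σ a = σ f + σ (σ f) + σ (σ e) + 1.
  by apply: add0_eq; rewrite -[RHS]E3; ring.
have he2 : σ (σ e) = σ (σ (σ f)) + f + e.
  have := congr1 (σ \o σ) ha1; rewrite /= !rmorphD /= !rmorph1 !frob4 => E.
  by have := congr1 σ ha2; rewrite rmorphD /= rmorph1 E => /addIr.
have hc : σ f + σ e + f + e + 1 = 0.
  by rewrite -[RHS]E5 hb ha2 !rmorphD /= he2; ring: two_eq0.
have hf : σ f = f.
  have := congr1 σ hc; rewrite !rmorphD /= !rmorph1 rmorph0 he2 => E.
  apply: σσ_inj; apply: add0_eq => /=.
  transitivity ((σ f + σ e + f + e + 1) +
    (σ (σ f) + (σ (σ (σ f)) + f + e) + σ f + σ e + 1)); first by ring: two_eq0.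
  by rewrite hc E addr0.
have he : σ e = e + 1 by rewrite -[RHS]addr0 -hc hf; ring: two_eq0.
have hσσe : σ (σ e) = e by rewrite he rmorphD /= rmorph1 he; ring: two_eq0.
have hσσf : σ (σ f) = f by rewrite !hf.
have ha : a = e.
  by apply: (fmorph_inj σ); rewrite /= ha1 hσσf hσσe hf he; ring: two_eq0.
have hfe : f = e ^+ 2 + e.
  by apply: add0_eq; rewrite -[RHS]E2 hσσf hσσe hb hf; ring: two_eq0.
move/eqP: (no_cube_root_unity hf); apply.
transitivity (f * σ (σ f) + a * (σ (σ e) + 1) + 1).
  by rewrite hσσf hσσe ha; ring: hfe.
by rewrite E1 (addrr_pchar2 pcharL2).
Qed.

Lemma graph_frob_basis (X Y : 'I_4 -> L) (a b f e : L) : moore_full_rank X Y ->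
    (forall j, σ (σ (Y j)) = σ (X j) + a * X j + b * Y j) ->
    (forall j, σ (σ (X j)) = σ (X j) + σ (Y j) + f * X j + e * Y j) ->
  forall l0 l1 l2 l3,
    (forall j, l0 * X j + l1 * Y j + l2 * σ (X j) + l3 * σ (Y j) = 0) ->
  [/\ l0 = 0, l1 = 0, l2 = 0 & l3 = 0].
Proof.
move=> moore RY RX; apply: free4_of_annihilator => c SX SY SσX SσY.
apply: moore => i.
suff [] : [/\ \sum_j c j * frob i (X j) = 0, \sum_j c j * frob i (Y j) = 0,
   \sum_j c j * frob i.+1 (X j) = 0 & \sum_j c j * frob i.+1 (Y j) = 0] by [].
elim: i => [|i [IX IY IσX IσY]]; first by split.
split=> //.
  apply: (sum_mul_lincomb_eq0 (k1 := 1) (k2 := 1) (k3 := frob i f) (k4 := frob i e)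
    _ IσX IσY IX IY) => j.
  by rewrite (frobSr i.+1) (frobSr i) RX !rmorphD !rmorphM /= -!frobSr; ring.
apply: (sum_mul_lincomb_eq0 (k1 := 1) (k2 := frob i a) (k3 := frob i b) (k4 := 0)
  _ IσX IX IY IY) => j.
by rewrite (frobSr i.+1) (frobSr i) RY !rmorphD !rmorphM /= -!frobSr; ring.
Qed.

Lemma moore_graph_absurd (X Y : 'I_4 -> L) (a b c d : L) : moore_full_rank X Y ->
    (forall j, σ (X j) + σ (σ (Y j)) = a * X j + b * Y j) ->
    (forall j, σ (σ (X j)) + σ (Y j) + σ (σ (Y j)) = c * X j + d * Y j) ->
  False.
Proof.
move=> moore T2 T3; set f := a + c; set e := b + d.
have RY j : σ (σ (Y j)) = σ (X j) + a * X j + b * Y j.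
  by apply: (addrI (σ (X j))); rewrite T2; ring: two_eq0.
have RX j : σ (σ (X j)) = σ (X j) + σ (Y j) + f * X j + e * Y j.
  apply: (addIr (σ (Y j) + σ (σ (Y j)))).
  by rewrite addrA T3 RY /f /e; ring: two_eq0.
clearbody f e; have basis := graph_frob_basis moore RY RX.
have X3 j : σ (σ (σ (X j))) =
    (f + a) * X j + (e + b) * Y j + σ f * σ (X j) + (σ e + 1) * σ (Y j).
  by rewrite RX !rmorphD !rmorphM /= RX RY; ring: two_eq0.
have Y3 j : σ (σ (σ (Y j))) =
    f * X j + e * Y j + (σ a + 1) * σ (X j) + (σ b + 1) * σ (Y j).
  by rewrite RY !rmorphD !rmorphM /= RX; ring: two_eq0.
have /basis[E1 E2 E3 E4] : forall j,
    (f * σ (σ f) + a * (σ (σ e) + 1) - 1) * X j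
    + (e * σ (σ f) + b * (σ (σ e) + 1)) * Y j
    + (σ f + σ a + σ (σ f) + σ (σ e) + 1) * σ (X j)
    + (σ e + σ b + σ (σ f)) * σ (Y j) = 0.
  move=> j; transitivity (σ (σ (σ (σ (X j)))) - X j); last by rewrite frob4 subrr.
  by rewrite X3 !rmorphD !rmorphM /= ?rmorph1 RX RY; ring: two_eq0.
have /basis[_ _ E5 E6] : forall j,
    ((σ (σ a) + 1) * f + (σ (σ b) + 1) * a) * X j
    + ((σ (σ a) + 1) * e + (σ (σ b) + 1) * b - 1) * Y j
    + (σ f + σ (σ a) + σ (σ b)) * σ (X j) + (σ e + σ (σ a) + 1) * σ (Y j) = 0.
  move=> j; transitivity (σ (σ (σ (σ (Y j)))) - Y j); last by rewrite frob4 subrr.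
  by rewrite Y3 !rmorphD !rmorphM /= ?rmorph1 RX RY; ring: two_eq0.
apply: (frob_system_absurd _ E2 E3 E4 E5 E6).
by apply/eqP; rewrite -subr_eq0 E1.
Qed.

Lemma proportional_frob_basis (X Y V : 'I_4 -> L) (al be : L) :
    moore_full_rank X Y -> (forall j, X j = al * V j) -> (forall j, Y j = be * V j) ->
  forall l0 l1 l2 l3,
    (forall j, l0 * V j + l1 * σ (V j) + l2 * σ (σ (V j)) + l3 * σ (σ (σ (V j))) = 0) ->
  [/\ l0 = 0, l1 = 0, l2 = 0 & l3 = 0].
Proof.
move=> moore XV YV; apply: free4_of_annihilator => c S0 S1 S2 S3.
apply: moore => i; have SV : \sum_j c j * frob i (V j) = 0.
  suff [] : [/\ \sum_j c j * frob i (V j) = 0, \sum_j c j * frob i.+1 (V j) = 0,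
    \sum_j c j * frob i.+2 (V j) = 0 & \sum_j c j * frob i.+3 (V j) = 0] by [].
  elim: i => [|i [IH0 IH1 IH2 IH3]].
    split=> //; first by under eq_bigr => j _ do rewrite frob2.
    by under eq_bigr => j _ do rewrite (frobSr 2) frob2.
  by split=> //; under eq_bigr => j _ do rewrite frob_addn4.
by split; apply: (sum_mul_lincomb_eq0 (k2 := 0) (k3 := 0) (k4 := 0) _ SV SV SV SV)
  => j; rewrite ?XV ?YV rmorphM /= mul0r !addr0.
Qed.

Lemma moore_proportional_minors_eq0 (X Y V : 'I_4 -> L) (al be x0 x1 x2 : L) :
    moore_full_rank X Y -> (forall j, X j = al * V j) -> (forall j, Y j = be * V j) ->
    (forall j, x0 * V j + x1 * (σ (X j) + σ (σ (Y j)))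
               + x2 * (σ (σ (X j)) + σ (Y j) + σ (σ (Y j))) = 0) ->
  x1 = 0 /\ x2 = 0.
Proof.
move=> moore XV YV rel; have basis := proportional_frob_basis moore XV YV.
have ab_neq0 : (al != 0) || (be != 0).
  case: (eqVneq al 0) (eqVneq be 0) => [al0 | //] [be0 | _]; last by rewrite orbT.
  have sum0 (Z : 'I_4 -> L) : (forall j, Z j = 0) ->
      forall i, \sum_j 1 * frob i (Z j) = 0.
    by move=> Z0 i; apply: big1 => j _; rewrite Z0 rmorph0 mulr0.
  have X0 j : X j = 0 by rewrite XV al0 mul0r.
  have Y0 j : Y j = 0 by rewrite YV be0 mul0r.
  have := moore (fun=> 1) (fun i => conj (sum0 X X0 i) (sum0 Y Y0 i)) ord0.
  by move/eqP; rewrite oner_eq0.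
have /basis[_ l1_0 l2_0 _] : forall j, x0 * V j + (x1 * σ al + x2 * σ be) * σ (V j)
    + (x1 * σ (σ be) + x2 * (σ (σ al) + σ (σ be))) * σ (σ (V j))
    + 0 * σ (σ (σ (V j))) = 0.
  by move=> j; rewrite -[RHS](rel j) XV YV !rmorphM /=; ring: two_eq0.
have det_neq0 : σ al * (σ (σ al) + σ (σ be)) + σ be * σ (σ be) != 0.
  rewrite (_ : _ + _ = σ (al * σ al + al * σ be + be * σ be)).
    by rewrite fmorph_eq0 frob_form_neq0.
  by rewrite !rmorphD !rmorphM /=; ring.
split; apply: (mulIf det_neq0); rewrite mul0r.
  transitivity ((σ (σ al) + σ (σ be)) * (x1 * σ al + x2 * σ be)
    + σ be * (x1 * σ (σ be) + x2 * (σ (σ al) + σ (σ be)))); first by ring: two_eq0.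
  by rewrite l1_0 l2_0; ring.
transitivity (σ al * (x1 * σ (σ be) + x2 * (σ (σ al) + σ (σ be)))
  + σ (σ be) * (x1 * σ al + x2 * σ be)); first by ring: two_eq0.
by rewrite l1_0 l2_0; ring.
Qed.

HB.instance Definition _ :=
  GRing.isLinear.Build K (L * L)%type (L4 L) *:%R (@Umap K L) (Umap_linear cardK).

Lemma UmapE (x y : L) : Umap (x, y) =
  [ffun i : 'I_4 => [:: x; y; σ x + σ (σ y); σ (σ x) + σ y + σ (σ y)]`_i].
Proof. by apply/ffunP => i; rewrite !ffunE -!frob2 /frob expn1. Qed.

Lemma Uspace_Hspace_moore (A : 'M[L]_(2, 4)) :
    (4 <= \dim (Uspace L :&: Hspace A))%N ->
  exists (X Y u v : 'I_4 -> L),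
    moore_full_rank X Y /\ forall j, Umap (X j, Y j) = rowmap A (u j, v j).
Proof.
move=> dim_ge4; have [w w_free w_sub] := free_tuple_in_vspace dim_ge4.
have w_UH (j : 'I_4) : w`_j \in (Uspace L :&: Hspace A)%VS.
  by have := mem_tnth j w; rewrite (tnth_nth 0) => /w_sub.
have /(@fin_all_exists _ (fun=> (L * L)%type)) [s w_U] :
    forall j : 'I_4, exists s, w`_j = Umap s.
  move=> j; have /memv_capP[/memv_imgP[s _ ->] _] := w_UH j.
  by exists s; rewrite lfunE.
have /(@fin_all_exists _ (fun=> (L * L)%type)) [p w_H] :
    forall j : 'I_4, exists p, w`_j = rowmap A p.
  move=> j; have /memv_capP[_ /memv_imgP[p _ ->]] := w_UH j.
  by exists p; rewrite lfunE.
exists (fun j => (s j).1), (fun j => (s j).2), (fun j => (p j).1), (fun j => (p j).2).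
split=> [|j]; last by rewrite -!surjective_pairing -w_U -w_H.
apply: moore_full_rank_of_free => d dX dY; move/freeP: w_free; apply.
transitivity (Umap (\sum_j d j *: s j)).
  by rewrite linear_sum /=; apply: eq_bigr => j _; rewrite linearZ /= -w_U.
have -> : \sum_j d j *: s j = 0.
  rewrite [LHS]surjective_pairing; congr (_, _).
    by rewrite (raddf_sum (@fst _ _)) -[RHS]dX.
  by rewrite (raddf_sum (@snd _ _)) -[RHS]dY.
exact: raddf0.
Qed.

Section PointsInH.

Variables (A : 'M[L]_(2, 4)) (X Y u v : 'I_4 -> L).
Hypotheses (A_free : row_free A) (moore : moore_full_rank X Y)
  (XY_in_H : forall j, Umap (X j, Y j) = rowmap A (u j, v j)).

Local Notation p k := (A 0 (inord k)).
Local Notation r k := (A 1 (inord k)).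

Let coord_in_H j k : (k < 4)%N ->
  [:: X j; Y j; σ (X j) + σ (σ (Y j)); σ (σ (X j)) + σ (Y j) + σ (σ (Y j))]`_k =
  u j * p k + v j * r k.
Proof.
move=> k_lt4; have := congr1 (fun w : L4 L => w (inord k)) (XY_in_H j).
by rewrite UmapE !ffunE inordK.
Qed.

Let cX j : X j = u j * p 0 + v j * r 0 := coord_in_H j (isT : 0 < 4)%N.
Let cY j : Y j = u j * p 1 + v j * r 1 := coord_in_H j (isT : 1 < 4)%N.
Let cT2 j : σ (X j) + σ (σ (Y j)) = u j * p 2 + v j * r 2 :=
  coord_in_H j (isT : 2 < 4)%N.
Let cT3 j : σ (σ (X j)) + σ (Y j) + σ (σ (Y j)) = u j * p 3 + v j * r 3 :=
  coord_in_H j (isT : 3 < 4)%N.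

Lemma graph_case_absurd : p 0 * r 1 != p 1 * r 0 -> False.
Proof.
rewrite -subr_eq0 => D_neq0.
apply: (moore_graph_absurd moore
  (a := (r 1 * p 2 - p 1 * r 2) / (p 0 * r 1 - p 1 * r 0))
  (b := (p 0 * r 2 - r 0 * p 2) / (p 0 * r 1 - p 1 * r 0))
  (c := (r 1 * p 3 - p 1 * r 3) / (p 0 * r 1 - p 1 * r 0))
  (d := (p 0 * r 3 - r 0 * p 3) / (p 0 * r 1 - p 1 * r 0))) => j.
  by rewrite cT2 cX cY; field.
by rewrite cT3 cX cY; field.
Qed.

Lemma proportional_case_absurd : p 0 * r 1 = p 1 * r 0 -> False.
Proof.
move=> /det2_eq0_proportional[P [R [al [be [PR_neq0 p0E r0E p1E r1E]]]]].
pose V j := u j * P + v j * R.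
have [x1_0 x2_0] : p 3 * R - P * r 3 = 0 /\ P * r 2 - p 2 * R = 0.
  apply: (@moore_proportional_minors_eq0 X Y V al be (p 2 * r 3 - p 3 * r 2)) => // j.
  - by rewrite cX p0E r0E /V; ring.
  - by rewrite cY p1E r1E /V; ring.
  - by rewrite cT2 cT3 /V; ring.
have [R0 P0] : R = 0 /\ - P = 0.
  apply: (row_free2_eq0 A_free) => k; rewrite -[k]inord_val.
  case: k => -[|[|[|[|k]]]] //= _.
  - by rewrite p0E r0E; ring.
  - by rewrite p1E r1E; ring.
  - by rewrite -[RHS]oppr0 -x2_0; ring.
  - by rewrite -[RHS]x1_0; ring.
by move: PR_neq0; rewrite R0 -oppr_eq0 P0 eqxx.
Qed.

End PointsInH.

End QuarticExtensionChar2.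

Local Close Scope ring_scope.

Theorem theorem4p5 (h : nat) (h_odd : odd h)
  (K : finFieldType) (cardK : #|K| = (2 ^ h)%N)
  (L : fieldExtType K) (dimL : \dim (fullv : {vspace L}) = 4%N) :
  forall A : 'M[L]_(2, 4), \rank A = 2%N ->
    (\dim (Uspace L :&: Hspace A)%VS <= 3)%N.
Proof.
move=> A rankA; rewrite leqNgt; apply/negP.
move=> /(Uspace_Hspace_moore cardK)[X [Y [u [v [moore XY_in_H]]]]].
have A_free : row_free A by rewrite /row_free rankA.
have [] := eqVneq (A 0 (inord 0) * A 1 (inord 1))%R (A 0 (inord 1) * A 1 (inord 0))%R.
  exact: (proportional_case_absurd h_odd cardK dimL A_free moore XY_in_H).
exact: (graph_case_absurd h_odd cardK dimL moore XY_in_H).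
Qed.
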